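(* Let $G=(V,E)$ be a finite, simple, connected graph, and let $\chi(G)$ denote its chromatic number. Then \[\frac{\chi(G)(\chi(G)-1)}{2} + |V| - \chi(G) = |E|\] holds if and only if $G$ is of type A or of type B.
   Context: All graphs are finite and simple (no loops, no multiple edges). Say that a graph $G$ is obtained from a graph $H$ by attaching trees if $G$ can be built from $H$ by a finite sequence (possibly empty) of steps, each of which adds one new vertex joined by an edge to exactly one already existing vertex (equivalently, $H$ is a subgraph of $G$ and the graph obtained from $G$ by deleting the edges of $H$ is a forest each of whose components contains exactly one vertex of $H$). A connected graph is of type A if it is obtained by attaching trees to a complete graph $K_n$ for some $n\ge 1$; it is of type B if it is obtained by attaching trees to an odd cycle $C_{2m+1}$ for some $m\ge 1$. The complete graph or odd cycle is called the underlying graph. *)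

From mathcomp Require Import all_boot.
Set Implicit Arguments. Unset Strict Implicit. Unset Printing Implicit Defensive.

Definition simple_graph (T : finType) (e : rel T) : Prop :=
  symmetric e /\ irreflexive e.

Definition connected_graph (T : finType) (e : rel T) : Prop :=
  0 < #|T| /\ forall x y : T, connect e x y.

Definition edge_set (T : finType) (e : rel T) : {set {set T}} :=
  [set [set p.1; p.2] | p in [set p : T * T | e p.1 p.2]].

Definition colorable (T : finType) (e : rel T) (k : nat) : Prop :=
  exists f : T -> 'I_k, forall x y : T, e x y -> f x != f y.

Definition is_chromatic_number (T : finType) (e : rel T) (k : nat) : Prop :=
  colorable e k /\ forall j, j < k -> ~ colorable e j.

(* G is obtained from the induced subgraph G[S] by attaching trees:
   the vertices outside S can be listed as s_0, ..., s_{m-1} (each once) so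
   that each s_i is adjacent to exactly one vertex of S ∪ {s_0,...,s_{i-1}}.
   (Then all edges of G not inside S are exactly these attaching edges.) *)
Definition attached_trees (T : finType) (e : rel T) (S : {set T}) : Prop :=
  exists s : seq T,
    [/\ uniq s,
        forall x : T, (x \in s) = (x \notin S) &
        forall i, i < size s ->
          #|[set y : T | e (nth y s i) y & (y \in S) || (y \in take i s)]| = 1].

Definition typeA (T : finType) (e : rel T) : Prop :=
  exists S : {set T},
    [/\ S != set0,
        (forall x y, x \in S -> y \in S -> x != y -> e x y) &
        attached_trees e S].

(* Type B: attaching trees to an odd cycle C_{2m+1}, m >= 1; the induced
   subgraph on the vertex set of the cycle c is exactly the cycle. *)
Definition typeB (T : finType) (e : rel T) : Prop :=
  exists c : seq T,
    [/\ uniq c, 3 <= size c, odd (size c),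
        (forall x y, x \in c -> y \in c -> e x y = (y == next c x) || (x == next c y)) &
        attached_trees e [set x in c]].

From mathcomp Require Import all_boot zify.
From Stdlib Require Import Classical.
Set Implicit Arguments. Unset Strict Implicit. Unset Printing Implicit Defensive.

(* Two counting facts drive the proof.  (1) For a nonempty vertex set S of a
   connected graph, list the vertices outside S so that each has an earlier
   "parent" neighbour (in S or before it in the list).  Parent edges are
   pairwise distinct edges leaving S, so at least |V - S| edges leave S, with
   equality iff G is obtained from G[S] by attaching trees; attaching trees
   also preserves colourability with at least two colours.  (2) If W is a
   critical set for chi - 1 colours (G[W] is not (chi-1)-colourable but all
   its proper induced subgraphs are), every vertex has at least chi - 1
   neighbours in W, so by the handshake lemma 2|E(W)| >= |W|(chi-1).
   Backwards, for a clique or an odd cycle S with trees attached, (1) counts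
   the edges and chi is |S| (or 3, or 1 or 2 if |S| = 1).  Forwards, the edge
   equation together with (1) and (2) leaves two cases: |W| = chi, so W is a
   clique, or chi = 3 and W is 2-regular, so W spans an odd cycle; in both
   cases equality in (1) shows that trees are attached to G[W]. *)

Section Colourings.
Variables (T : finType) (e : rel T).

Definition colorable_on (A : {set T}) (j : nat) : Prop :=
  exists f : T -> nat, (forall x, x \in A -> f x < j) /\
    (forall x y, x \in A -> y \in A -> e x y -> f x != f y).

Lemma colorable_on_sub (A B : {set T}) j :
  A \subset B -> colorable_on B j -> colorable_on A j.
Proof.
move=> /subsetP sAB [f [fj fP]]; exists f.
by split=> [x /sAB|x y /sAB xB /sAB yB]; auto.
Qed.

Lemma colorable_on_mon (A : {set T}) j j' :
  j <= j' -> colorable_on A j -> colorable_on A j'.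
Proof. by move=> jj' [f [fj fP]]; exists f; split=> // x /fj /leq_trans; apply. Qed.

Lemma colorable_on0 j : colorable_on set0 j.
Proof. by exists (fun _ => 0); split=> [x|x y]; rewrite inE. Qed.

Lemma colorable_onT j : colorable_on setT j <-> colorable e j.
Proof.
split=> [[f [fj fP]]|[f fP]].
  exists (fun x => Ordinal (fj x (in_setT x))) => x y exy.
  by rewrite -val_eqE /=; apply: fP.
by exists (fun x => nat_of_ord (f x)); split=> // x y _ _ /fP.
Qed.

Lemma colorable_on_card (A : {set T}) :
  irreflexive e -> colorable_on A #|A|.
Proof.
move=> irr_e; exists (fun x => index x (enum A)); split=> [x xA|x y xA yA exy].
  by rewrite cardE index_mem mem_enum.
have xy : x != y by apply: contraTneq exy => ->; rewrite irr_e.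
apply: contra xy => /eqP /(congr1 (nth x (enum A))).
by rewrite !nth_index ?mem_enum // => ->.
Qed.

Lemma clique_card_le (S : {set T}) j :
  (forall x y, x \in S -> y \in S -> x != y -> e x y) ->
  colorable e j -> #|S| <= j.
Proof.
move=> Sclique [f fP].
have <- : #|[set f x | x in S]| = #|S|.
  apply: card_in_imset => x y xS yS fxy; apply/eqP/negPn/negP => xy.
  by move: (fP _ _ (Sclique _ _ xS yS xy)); rewrite fxy eqxx.
by apply: leq_trans (max_card _) _; rewrite card_ord.
Qed.

Lemma colorable_pos j : 0 < #|T| -> colorable e j -> 0 < j.
Proof. by case/card_gt0P => x _ [f _]; have := ltn_ord (f x); case: j f. Qed.

Lemma chromatic_le k j : is_chromatic_number e k -> colorable e j -> k <= j.
Proof. by move=> [_ nk] cj; rewrite leqNgt; apply/negP => /nk. Qed.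

End Colourings.

Section Edges.
Variables (T : finType) (e : rel T).
Hypotheses (sym_e : symmetric e) (irr_e : irreflexive e).

Lemma edgeP E : reflect (exists x y, e x y /\ E = [set x; y]) (E \in edge_set e).
Proof.
apply: (iffP imsetP) => [[[x y]]|[x [y [exy ->]]]].
  by rewrite inE /= => exy ->; exists x, y.
by exists (x, y) => //; rewrite inE.
Qed.

Lemma set2_eq (a b c d : T) : [set a; b] = [set c; d] -> (a == c) || (a == d).
Proof. by move/setP/(_ a); rewrite !inE eqxx. Qed.

Definition inner_edges (S : {set T}) := edge_set e :&: [set E : {set T} | E \subset S].
Definition outer_edges (S : {set T}) := edge_set e :\: [set E : {set T} | E \subset S].

Lemma edge_split (S : {set T}) : #|edge_set e| = #|inner_edges S| + #|outer_edges S|.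
Proof. by rewrite cardsID. Qed.

Definition nbhd (W : {set T}) v := [set y in W | e v y].

Definition arcs (W : {set T}) :=
  [set q : T * T | [&& q.1 \in W, q.2 \in W & e q.1 q.2]].

Lemma arcs_card_degrees (W : {set T}) : #|arcs W| = \sum_(v in W) #|nbhd W v|.
Proof.
rewrite -sum1_card (partition_big (fun q => q.1) (fun v => v \in W)); last first.
  by move=> q; rewrite inE => /and3P [].
apply: eq_bigr => v vW.
rewrite -[#|nbhd W v|](card_in_imset (f := fun y => (v, y))); last by move=> a b _ _ [].
rewrite -sum1_card; apply: eq_bigl => q; rewrite !inE.
apply/idP/imsetP => [/andP [/and3P [q1 q2 eq] /eqP qv]|[y]].
  by exists q.2; [rewrite !inE q2 -qv eq | rewrite -qv; case: (q)].
by rewrite !inE => /andP [yW evy] ->; rewrite /= vW yW evy eqxx.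
Qed.

Lemma arcs_of_edge (W : {set T}) x y : x \in W -> y \in W -> e x y ->
  [set q in arcs W | [set q.1; q.2] == [set x; y]] = [set (x, y); (y, x)].
Proof.
move=> xW yW exy; apply/setP => -[a b]; rewrite !inE /= !xpair_eqE.
apply/idP/idP => [/andP [/and3P [aW bW eab] /eqP HE]|].
  have aE : a \in [set x; y] by rewrite -HE !inE eqxx.
  have bE : b \in [set x; y] by rewrite -HE !inE eqxx orbT.
  have ab : a != b by apply: contraTneq eab => ->; rewrite irr_e.
  move: aE bE ab; rewrite !inE.
  by case/orP => /eqP ->; case/orP => /eqP ->; rewrite ?eqxx ?orbT.
case/orP => /andP [/eqP -> /eqP ->]; rewrite ?xW ?yW ?exy ?eqxx //=.
by rewrite sym_e exy; apply/eqP/setUC.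
Qed.

Lemma arcs_card_edges (W : {set T}) : #|arcs W| = 2 * #|inner_edges W|.
Proof.
rewrite mulnC -[#|arcs W|]sum1_card.
rewrite (partition_big (fun q => [set q.1; q.2]) (fun E => E \in inner_edges W));
  last first.
  move=> q; rewrite inE => /and3P [q1 q2 eq]; rewrite !inE; apply/andP; split.
    by apply/edgeP; exists q.1, q.2.
  by apply/subsetP => z; rewrite !inE => /orP [] /eqP ->.
rewrite -sum_nat_const; apply: eq_bigr => E.
rewrite !inE => /andP [/edgeP [x [y [exy ->]]] /subsetP sW].
have xW : x \in W by apply: sW; rewrite !inE eqxx.
have yW : y \in W by apply: sW; rewrite !inE eqxx orbT.
have xy : x != y by apply: contraTneq exy => ->; rewrite irr_e.
have c2 : #|[set (x, y); (y, x)]| = 2 by rewrite cards2 xpair_eqE (negbTE xy).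
rewrite sum1_card -c2 -(arcs_of_edge xW yW exy).
by apply: eq_card => q; rewrite -topredE /= !in_set.
Qed.

Lemma handshake (W : {set T}) : 2 * #|inner_edges W| = \sum_(v in W) #|nbhd W v|.
Proof. by rewrite -arcs_card_edges arcs_card_degrees. Qed.

Lemma clique_inner_edges (S : {set T}) :
  (forall x y, x \in S -> y \in S -> x != y -> e x y) ->
  2 * #|inner_edges S| = #|S| * (#|S| - 1).
Proof.
move=> Sclique; rewrite handshake.
rewrite (eq_bigr (fun _ => #|S| - 1)) ?sum_nat_const // => v vS.
rewrite (cardsD1 v S) vS add1n subSS subn0.
apply: eq_card => y; rewrite !inE.
case: (y =P v) => [->|/eqP yv] /=; first by rewrite irr_e andbF.
by case: (boolP (y \in S)) => yS //=; apply: Sclique; rewrite // eq_sym.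
Qed.

End Edges.

Section TreeAttachment.
Variables (T : finType) (e : rel T).
Hypotheses (sym_e : symmetric e) (irr_e : irreflexive e).

Definition parent_order (S : {set T}) (s : seq T) (p : T -> T) :=
  [/\ uniq s, forall x, (x \in s) = (x \notin S) &
      forall x, x \in s -> e x (p x) /\
        (p x \in S \/ (p x \in s /\ index (p x) s < index x s))].

Definition parent_edges (S : {set T}) (p : T -> T) := [set [set x; p x] | x in ~: S].

Lemma crossing_edge (S : {set T}) z w :
  z \in S -> w \notin S -> connect e z w -> exists y x, [/\ y \in S, x \notin S & e y x].
Proof.
move=> zS wS /connectP [q pq ew]; subst w.
elim: q z zS pq wS => [|a q IH] z zS /= => [_|/andP [eza pq]]; first by rewrite zS.
case: (boolP (a \in S)) => aS; first exact: IH pq.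
by move=> _; exists z, a.
Qed.

(* In a connected graph every nonempty S has a parent order: repeatedly add
   the outer end of a crossing edge to S. *)
Lemma parent_order_exists (S : {set T}) :
  connected_graph e -> S != set0 -> exists s p, parent_order S s p.
Proof.
move=> [_ conn]; move: {2}#|~: S| (leqnn #|~: S|) => N.
elim: N S => [|N IH] S hN /set0Pn [z zS].
  exists [::], id; split=> // x; rewrite in_nil.
  have /setP/(_ x) : ~: S = set0 by apply/eqP; rewrite -cards_eq0 -leqn0.
  by rewrite !inE => ->.
case: (set_0Vmem (~: S)) => [/setP C0|[w]].
  by exists [::], id; split=> // x; rewrite in_nil; move: (C0 x); rewrite !inE => ->.
rewrite inE => wS; have [y [x [yS xS eyx]]] := crossing_edge zS wS (conn z w).
have hN' : #|~: (x |: S)| <= N.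
  have : ~: (x |: S) \proper ~: S.
    rewrite properEneq setCS subsetUr andbT.
    by apply/negP => /eqP /setP /(_ x); rewrite !inE eqxx xS.
  by move/proper_card; lia.
have [s [p [us ms ps]]] : exists s p, parent_order (x |: S) s p.
  by apply: IH hN' _; apply/set0Pn; exists x; rewrite !inE eqxx.
have xs : x \notin s by rewrite ms !inE eqxx.
exists (x :: s), (fun v => if v == x then y else p v); split.
- by rewrite /= xs us.
- by move=> v; rewrite inE ms !inE negb_or; case: eqP => // ->; rewrite xS.
move=> v; rewrite inE => /orP [/eqP ->|vs].
  by rewrite eqxx sym_e eyx; split=> //; left.
have vx : (v == x) = false by apply/negbTE; apply: contraNneq xs => <-.
rewrite vx; have [epv [pvS|[pvs lt]]] := ps v vs; split=> //.
  move: pvS; rewrite !inE => /orP [/eqP ->|]; last by left.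
  by right; rewrite /= eqxx eq_sym vx.
have px : (x == p v) = false by apply/negbTE; apply: contraNneq xs => ->.
by right; rewrite /= inE pvs orbT px eq_sym vx.
Qed.

Lemma outer_edge_parent (S : {set T}) (p : T -> T) :
  outer_edges e S \subset parent_edges S p ->
  forall x y, e x y -> x \notin S -> y = p x \/ (y \notin S /\ x = p y).
Proof.
move=> /subsetP sub x y exy xS.
have : [set x; y] \in parent_edges S p.
  apply: sub; rewrite !inE; apply/andP; split; last by apply/edgeP; exists x, y.
  by apply/negP => /subsetP /(_ x); rewrite !inE eqxx (negbTE xS) => /(_ isT).
case/imsetP => z; rewrite inE => zS E.
have ne : forall a, e a a -> False by move=> a; rewrite irr_e.
have := set2_eq (esym E); case/orP => /eqP zE; subst z.
  move/setP: E => /(_ y); rewrite !inE eqxx orbT => /esym /orP [/eqP yx|/eqP]; last by left.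
  by subst y; case: (ne x).
move/setP: E => /(_ x); rewrite !inE eqxx /= => /esym /orP [/eqP xy|/eqP]; last by right.
by subst y; case: (ne x).
Qed.

Section ParentOrder.
Variables (S : {set T}) (s : seq T) (p : T -> T).
Hypothesis po : parent_order S s p.

(* Parent edges are distinct: two vertices cannot be each other's parent. *)
Lemma parent_edge_inj : {in ~: S &, injective (fun x => [set x; p x])}.
Proof.
case: po => [us ms ps] x y; rewrite !inE => xS yS E.
apply/eqP/negPn/negP => xy.
have := set2_eq E; rewrite (negbTE xy) /= => /eqP xpy.
have := set2_eq (esym E); rewrite eq_sym (negbTE xy) /= => /eqP ypx.
have xs : x \in s by rewrite ms.
have ys : y \in s by rewrite ms.
have [_ [|[_ h1]]] := ps x xs; first by rewrite -ypx (negbTE yS).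
have [_ [|[_ h2]]] := ps y ys; first by rewrite -xpy (negbTE xS).
by move: h1 h2; rewrite -xpy -ypx => h1 h2; move: (ltn_trans h1 h2); rewrite ltnn.
Qed.

Lemma card_parent_edges : #|parent_edges S p| = #|~: S|.
Proof. exact: card_in_imset parent_edge_inj. Qed.

Lemma parent_edges_outer : parent_edges S p \subset outer_edges e S.
Proof.
case: po => [us ms ps]; apply/subsetP => E /imsetP [x]; rewrite inE => xS ->.
have xs : x \in s by rewrite ms.
rewrite !inE; apply/andP; split; last by apply/edgeP; exists x, (p x); case: (ps x xs).
by apply/negP => /subsetP /(_ x); rewrite !inE eqxx (negbTE xS) => /(_ isT).
Qed.

Lemma parent_order_attached : #|outer_edges e S| <= #|~: S| -> attached_trees e S.
Proof.
move=> hc; have EP : parent_edges S p = outer_edges e S.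
  by apply/eqP; rewrite eqEcard parent_edges_outer card_parent_edges.
have par : forall x y, e x y -> x \notin S -> y = p x \/ (y \notin S /\ x = p y).
  by apply: outer_edge_parent; rewrite EP.
case: po => [us ms ps]; exists s; split=> // i hi.
have x0 : T by move: hi; case: (s) => [//|a _ _]; exact: a.
set x := nth x0 s i.
have xs : x \in s by exact: mem_nth.
have ix : index x s = i by exact: index_uniq.
have xS : x \notin S by rewrite -ms.
apply/eqP/cards1P; exists (p x); apply/setP => y.
rewrite !inE (set_nth_default x0 y hi) -/x.
apply/idP/idP => [/andP [exy hy]|/eqP ->]; last first.
  have [-> [->|[pxs h2]]] := ps x xs => //=.
  by rewrite in_take // -ix h2 orbT.
case: (par x y exy xS) => [->|[yS xpy]]; first by [].
have ys : y \in s by rewrite ms.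
have ity : index y s < i by case/orP: hy => [yS'|]; [rewrite yS' in yS | rewrite in_take].
have [_ [|[_ h]]] := ps y ys; first by rewrite -xpy (negbTE xS).
by move: (ltn_trans h ity); rewrite -xpy ix ltnn.
Qed.

End ParentOrder.

Lemma attached_parent (S : {set T}) : attached_trees e S ->
  exists s p, [/\ uniq s, forall x, (x \in s) = (x \notin S) &
    forall x, x \in s -> forall y,
      (e x y && ((y \in S) || (y \in take (index x s) s))) = (y == p x)].
Proof.
move=> [s [us ms hs]].
pose Y x := [set y | e x y & (y \in S) || (y \in take (index x s) s)].
have hY x : x \in s -> exists a, Y x = [set a].
  move=> xs; have hi : index x s < size s by rewrite index_mem.
  have /eqP/cards1P [a Ha] := hs _ hi; exists a; rewrite -Ha.
  by apply/setP => y; rewrite !inE (set_nth_default x y hi) nth_index.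
exists s, (fun x => odflt x [pick y in Y x]); split=> // x xs y.
have [a Ha] := hY x xs; case: pickP => [b|]; last by move/(_ a); rewrite Ha inE eqxx.
by rewrite Ha !inE => /eqP ->; move/setP: Ha => /(_ y); rewrite !inE.
Qed.

Lemma attached_parent_order (S : {set T}) : attached_trees e S ->
  exists s p, parent_order S s p /\ outer_edges e S \subset parent_edges S p.
Proof.
move=> /attached_parent [s [p [us ms hp]]]; exists s, p; split.
  split=> // x xs; have := hp x xs (p x); rewrite eqxx => /andP [-> h]; split=> //.
  case/orP: h => [|h]; [by left|right].
  by split; [exact: mem_take h | rewrite -in_take // (mem_take h)].
have key u v : u \in s -> e u v -> (v \in S) || (v \in take (index u s) s) ->
    [set u; v] \in parent_edges S p.
  move=> us' euv h; apply/imsetP; exists u; first by rewrite inE -ms.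
  by have := hp u us' v; rewrite euv h => /esym /eqP ->.
apply/subsetP => E; rewrite !inE => /andP [nsub /edgeP [a [b [eab HE]]]]; subst E.
have ab : a != b by apply: contraTneq eab => ->; rewrite irr_e.
case: (boolP (a \in S)) => aS; case: (boolP (b \in S)) => bS.
- by move: nsub; apply: contraNT => _; apply/subsetP => z; rewrite !inE => /orP [] /eqP ->.
- by rewrite setUC; apply: key; rewrite ?ms ?aS // sym_e.
- by apply: key; rewrite ?ms ?bS.
have as' : a \in s by rewrite ms.
have bs : b \in s by rewrite ms.
case: (ltngtP (index a s) (index b s)) => h.
- by rewrite setUC; apply: key; rewrite 1?sym_e // in_take // h orbT.
- by apply: key; rewrite // in_take // h orbT.
- by move: ab; rewrite -(nth_index a as') h nth_index // eqxx.
Qed.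

Lemma outer_edges_lb (S : {set T}) : connected_graph e -> S != set0 ->
  #|~: S| <= #|outer_edges e S|.
Proof.
move=> conn /(parent_order_exists conn) [s [p po]].
by rewrite -(card_parent_edges po) subset_leq_card // (parent_edges_outer po).
Qed.

Lemma attached_treesE (S : {set T}) : connected_graph e -> S != set0 ->
  attached_trees e S <-> #|outer_edges e S| = #|~: S|.
Proof.
move=> conn nS; split=> [/attached_parent_order [s [p [po sub]]]|eq].
  apply/eqP; rewrite -(card_parent_edges po) eqn_leq.
  by rewrite !subset_leq_card // (parent_edges_outer po).
have [s [p po]] := parent_order_exists conn nS.
by apply: parent_order_attached po _; rewrite eq.
Qed.

End TreeAttachment.

Section ColourExtension.
Variables (T : finType) (e : rel T) (S : {set T}) (p : T -> T).

Definition recolour (f : T -> nat) (x : T) : T -> nat :=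
  fun v => if v == x then (if f (p x) == 0 then 1 else 0) else f v.

Definition parents_before (t : seq T) :=
  forall x, x \in t -> x \notin S /\
    (p x \in S \/ (p x \in t /\ index (p x) t < index x t)).

Lemma parents_before_rcons t a : uniq (rcons t a) -> parents_before (rcons t a) ->
  parents_before t /\ (p a \in S \/ p a \in t).
Proof.
rewrite rcons_uniq => /andP [at_ ut] hp; split=> [x xt|].
  have xta : x \in rcons t a by rewrite mem_rcons inE xt orbT.
  have [xS h] := hp x xta; split=> //.
  case: h => [|[]]; first by left.
  rewrite -cats1 !index_cat xt mem_cat inE; case: ifP => pt; first by right.
  by have := index_size x t; lia.
have ata : a \in rcons t a by rewrite mem_rcons mem_head.
have [_ [|[]]] := hp a ata; first by left.
rewrite -cats1 !index_cat (negbTE at_) mem_cat inE; case: ifP => pt; first by right.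
by rewrite index_head; lia.
Qed.

Lemma sweep_colouring (f0 : T -> nat) (t : seq T) :
  uniq t -> parents_before t ->
  let F := foldl recolour f0 t in
  [/\ forall v, v \notin t -> F v = f0 v,
      forall x, x \in t -> F x != F (p x) &
      forall x, x \in t -> F x < 2].
Proof.
elim/last_ind: t => [|t a IH] //= uta hp.
have [hpt paSt] := parents_before_rcons uta hp.
move: uta; rewrite rcons_uniq => /andP [at_ ut].
have [Ha Hb Hc] := IH ut hpt; rewrite foldl_rcons.
set F := foldl recolour f0 t in Ha Hb Hc *.
have aS : a \notin S by case: (hp a); rewrite // mem_rcons mem_head.
have pa_a : p a != a by case: paSt => h; apply: contraTneq h => ->.
split.
- move=> v; rewrite mem_rcons inE negb_or => /andP [va vt].
  by rewrite /recolour (negbTE va) Ha.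
- move=> x; rewrite mem_rcons inE => /orP [/eqP ->|xt].
    rewrite /recolour eqxx (negbTE pa_a).
    by case: (F (p a) =P 0) => [->|/eqP h] //; rewrite eq_sym.
  have xa : x != a by apply: contraTneq xt => ->.
  have pxa : p x != a.
    by case: (hpt x xt) => _ [h|[h _]]; apply: contraTneq h => ->.
  by rewrite /recolour (negbTE xa) (negbTE pxa); apply: Hb.
- move=> x; rewrite mem_rcons inE => /orP [/eqP ->|xt].
    by rewrite /recolour eqxx; case: ifP.
  have xa : x != a by apply: contraTneq xt => ->.
  by rewrite /recolour (negbTE xa); apply: Hc.
Qed.

End ColourExtension.

Lemma attached_colorable (T : finType) (e : rel T) (S : {set T}) j :
  symmetric e -> irreflexive e -> attached_trees e S ->
  colorable_on e S j -> 2 <= j -> colorable_on e setT j.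
Proof.
move=> sym_e irr_e /(attached_parent_order sym_e irr_e) [s [p [po sub]]].
move=> [f0 [f0j f0P]] j2.
have par := outer_edge_parent irr_e sub.
case: po => [us ms ps].
have hp : parents_before S p s by move=> x xs; split; [rewrite -ms | case: (ps x xs)].
have [Ha Hb Hc] := sweep_colouring f0 us hp.
set F := foldl (recolour p) f0 s in Ha Hb Hc.
have FS x : x \in S -> F x = f0 x by move=> xS; rewrite Ha // ms xS.
exists F; split=> [x _|x y _ _ exy].
  case: (boolP (x \in s)) => xs; first exact: leq_trans (Hc x xs) j2.
  by rewrite FS ?f0j // -[x \in S]negbK -ms.
case: (boolP (x \in S)) => xS; last first.
  by case: (par x y exy xS) => [->|[yS ->]]; [|rewrite eq_sym]; apply: Hb; rewrite ms.
case: (boolP (y \in S)) => yS; first by rewrite !FS //; apply: f0P.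
rewrite sym_e in exy.
by case: (par y x exy yS) => [->|[xS' ->]]; [rewrite eq_sym|]; apply: Hb; rewrite ms.
Qed.

Section OddCycles.

Lemma next_cons_nth (A : eqType) (x0 : A) (c' : seq A) x : x \in x0 :: c' ->
  next (x0 :: c') x = nth x0 (x0 :: c') (index x (x0 :: c')).+1.
Proof. by move=> xc; rewrite next_nth xc. Qed.

Lemma nth_cons_default (A : eqType) (x0 : A) (c' : seq A) k :
  size c' < k -> nth x0 (x0 :: c') k = x0.
Proof. by case: k => // k /= h; rewrite nth_default. Qed.

Lemma next_next_neq (A : eqType) (c : seq A) x :
  uniq c -> 3 <= size c -> x \in c -> next c (next c x) != x.
Proof.
case: c => [//|x0 c'] uc sc xc; set c := x0 :: c' in uc sc xc *.
have sz : size c = (size c').+1 by [].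
have ex : nth x0 c (index x c) = x by rewrite nth_index.
have nu i j : i < size c -> j < size c -> (nth x0 c i == nth x0 c j) = (i == j).
  by move=> hi hj; rewrite nth_uniq.
have hi : index x c < size c by rewrite index_mem.
rewrite (next_cons_nth xc).
case: (ltnP (index x c).+1 (size c)) => h1.
  have yc : nth x0 c (index x c).+1 \in c by rewrite mem_nth.
  rewrite (next_cons_nth yc) index_uniq //.
  case: (ltnP (index x c).+2 (size c)) => h2; first by rewrite -{2}ex nu //; lia.
  rewrite nth_cons_default; last by lia.
  by rewrite -ex -[X in X != _]/(nth x0 c 0) nu //; lia.
rewrite -/c nth_cons_default; last by lia.
rewrite (next_cons_nth (mem_head x0 c')) /= eqxx.
by rewrite -ex -[nth x0 c' 0]/(nth x0 c 1) nu //; lia.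
Qed.

Variables (T : finType) (e : rel T).

(* An odd cycle is not 2-colourable: colours alternate along the cycle. *)
Lemma odd_cycle_not_2colorable (c : seq T) :
  uniq c -> odd (size c) -> (forall x, x \in c -> e x (next c x)) ->
  ~ colorable_on e [set x in c] 2.
Proof.
case: c => [//|x0 c'] uc oc he [f [f2 fP]]; set c := x0 :: c' in uc oc he f2 fP.
have sz : size c = (size c').+1 by [].
pose g i := f (nth x0 c i).
have inc i : i < size c -> nth x0 c i \in [set x in c] by rewrite inE => /mem_nth ->.
have g2 i : i < size c -> g i < 2 by move=> /inc /f2.
have step i : i < size c' -> g i.+1 != g i.
  move=> hi; have hi1 : i < size c by rewrite sz ltnW.
  have hi2 : i.+1 < size c by rewrite sz.
  rewrite /g eq_sym; apply: fP; [exact: inc | exact: inc |].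
  by have := he _ (mem_nth x0 hi1); rewrite next_cons_nth ?mem_nth // index_uniq.
have alt i : i <= size c' -> g i = if odd i then 1 - g 0 else g 0.
  elim: i => [|i IH] hi //.
  have := step i hi; rewrite IH 1?ltnW //.
  have := g2 0 isT; have := g2 i.+1; rewrite sz ltnS => /(_ hi).
  by rewrite oddS; case: (odd i) => /=; lia.
have lc : nth x0 c (size c') \in c by rewrite mem_nth.
have := he _ lc; rewrite next_cons_nth // index_uniq // nth_cons_default // => el.
have := fP _ _ (inc _ (ltnSn _)) (inc 0 isT) el; rewrite -/(g _) -/(g 0) alt //.
by move: oc; rewrite sz /= => /negPf ->; rewrite eqxx.
Qed.

(* A cycle is 3-colourable: alternate 0, 1 and give the last vertex 2. *)
Lemma cycle_3colorable (c : seq T) : uniq c -> 3 <= size c ->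
  (forall x y, x \in c -> y \in c -> e x y -> (y == next c x) || (x == next c y)) ->
  colorable_on e [set x in c] 3.
Proof.
case: c => [//|x0 c'] uc sc he; set c := x0 :: c' in uc sc he *.
pose col x := if index x c == (size c).-1 then 2 else (odd (index x c) : nat).
have key x : x \in c -> col x != col (next c x).
  move=> xc; have hi : index x c < size c by rewrite index_mem.
  rewrite next_cons_nth // -/c.
  case: (ltnP (index x c).+1 (size c)) => h1.
    rewrite /col index_uniq //.
    have -> : (index x c == (size c).-1) = false by apply/negbTE; lia.
    by case: ifP => _ /=; case: odd.
  rewrite nth_cons_default; last by rewrite /= ltnS in h1.
  rewrite /col /= eqxx.
  have -> : (index x c == (size c).-1) = true by apply/eqP; lia.
  by have -> : (0 == (size c').+1.-1) = false by apply/negbTE; rewrite /= in sc; lia.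
exists col; split=> [x _|x y]; first by rewrite /col; case: ifP => //; case: odd.
rewrite !inE => xc yc exy.
by case/orP: (he x y xc yc exy) => /eqP ->; [|rewrite eq_sym]; apply: key.
Qed.

Lemma cycle_inner_edges (c : seq T) : uniq c -> 3 <= size c ->
  (forall x y, x \in c -> y \in c -> e x y = (y == next c x) || (x == next c y)) ->
  #|inner_edges e [set x in c]| = size c.
Proof.
move=> uc sc he.
have -> : inner_edges e [set x in c] = [set [set x; next c x] | x in [set x in c]].
  apply/setP => E; apply/idP/imsetP.
    rewrite !inE => /andP [/edgeP [x [y [exy ->]]] /subsetP sub].
    have xc : x \in c by have := sub x; rewrite !inE eqxx => /(_ isT).
    have yc : y \in c by have := sub y; rewrite !inE eqxx orbT => /(_ isT).
    move: exy; rewrite he // => /orP [] /eqP ->; first by exists x; rewrite ?inE.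
    by exists y; rewrite ?inE // setUC.
  move=> [x]; rewrite inE => xc ->; rewrite !inE; apply/andP; split.
    by apply/edgeP; exists x, (next c x); split=> //; rewrite he ?mem_next ?eqxx.
  by apply/subsetP => z; rewrite !inE => /orP [] /eqP ->; rewrite ?mem_next.
rewrite card_in_imset; first by rewrite cardsE; apply/card_uniqP.
move=> x y; rewrite !inE => xc yc E; apply/eqP/negPn/negP => xy.
have := set2_eq E; rewrite (negbTE xy) /= => /eqP xny.
move/setP: E => /(_ y); rewrite !inE eqxx /= (eq_sym y x) (negbTE xy) /= => /eqP ynx.
by move: (next_next_neq uc sc xc); rewrite -ynx -xny eqxx.
Qed.

End OddCycles.

Lemma free_colour (L : seq nat) j : size L < j -> exists2 c, c < j & c \notin L.
Proof.
move=> hL; case: (boolP (all (mem L) (iota 0 j))) => hall; last first.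
  by have [c] := allPn hall; rewrite mem_iota add0n => cj cL; exists c.
have : size (iota 0 j) <= size L.
  by apply: uniq_leq_size (iota_uniq _ _) _ => z; move/allP: hall => /(_ z).
by rewrite size_iota; lia.
Qed.

Section CriticalSets.
Variables (T : finType) (e : rel T).
Hypotheses (sym_e : symmetric e) (irr_e : irreflexive e).

Definition critical_set (j : nat) (W : {set T}) :=
  ~ colorable_on e W j /\ forall B : {set T}, B \proper W -> colorable_on e B j.

Lemma critical_subset_exists j (A : {set T}) :
  ~ colorable_on e A j -> exists2 W : {set T}, W \subset A & critical_set j W.
Proof.
move: {2}#|A| (leqnn #|A|) => N; elim: N A => [|N IH] A hA nA.
  by exists A => //; split=> // B /proper_card; lia.
case: (classic (forall B : {set T}, B \proper A -> colorable_on e B j)) => H.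
  by exists A.
have [B HB] := not_all_ex_not _ _ H.
have [pB nB] := imply_to_and _ _ HB.
have [|W sWB cW] := IH B _ nB; first by have := proper_card pB; lia.
by exists W => //; apply: subset_trans sWB (proper_sub pB).
Qed.

Lemma critical_nonempty j (W : {set T}) : critical_set j W -> W != set0.
Proof.
by move=> [nW _]; apply/negP => /eqP W0; apply: nW; rewrite W0; apply: colorable_on0.
Qed.

Lemma critical_card j (W : {set T}) : critical_set j W -> j < #|W|.
Proof.
move=> [nW _]; rewrite ltnNge; apply/negP => h.
by apply: nW; apply: colorable_on_mon h (colorable_on_card W irr_e).
Qed.

Lemma colour_extend_at (W : {set T}) v (f : T -> nat) j c :
  (forall x, x \in W :\ v -> f x < j) ->
  (forall x y, x \in W :\ v -> y \in W :\ v -> e x y -> f x != f y) ->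
  c < j -> (forall y, y \in W -> e v y -> c != f y) -> colorable_on e W j.
Proof.
move=> fj fP cj fL; exists (fun x => if x == v then c else f x); split.
  by move=> x xW; case: eqP => // /eqP xv; apply: fj; rewrite !inE xv.
move=> x y xW yW exy.
case: (x =P v) => [xv|/eqP xv]; case: (y =P v) => [yv|/eqP yv].
- by subst; rewrite irr_e in exy.
- by subst; apply: fL.
- by subst; rewrite eq_sym; apply: fL; rewrite // sym_e.
- by apply: fP; rewrite // !inE ?xv ?yv.
Qed.

(* In a critical set every vertex has at least j neighbours: otherwise a
   colouring of W - v leaves a colour free for v. *)
Lemma critical_degree j (W : {set T}) v :
  critical_set j W -> v \in W -> j <= #|nbhd e W v|.
Proof.
move=> [nW mW] vW; have [f [fj fP]] := mW _ (properD1 vW).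
rewrite leqNgt; apply/negP => hlt; apply: nW.
have [c cj cL] : exists2 c, c < j & c \notin map f (enum (nbhd e W v)).
  by apply: free_colour; rewrite size_map -cardE.
apply: colour_extend_at fj fP cj _ => y yW evy.
by apply: contraNneq cL => ->; apply: map_f; rewrite mem_enum !inE yW evy.
Qed.

Lemma critical_clique j (W : {set T}) : critical_set j W -> #|W| = j.+1 ->
  forall x y, x \in W -> y \in W -> x != y -> e x y.
Proof.
move=> cW hw x y xW yW xy.
have sub : nbhd e W x \subset W :\ x.
  apply/subsetP => z; rewrite !inE => /andP [zW exz]; rewrite zW andbT.
  by apply: contraTneq exz => ->; rewrite irr_e.
have : nbhd e W x == W :\ x.
  rewrite eqEcard sub /=; move: hw; rewrite (cardsD1 x W) xW add1n => -[->].
  exact: critical_degree cW xW.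
by move/eqP/setP/(_ y); rewrite !inE yW eq_sym xy andbT /= => ->.
Qed.

Lemma critical_small j (W : {set T}) : critical_set j W -> j <= 1 -> #|W| = j.+1.
Proof.
move=> cW j1; have /set0Pn [v vW] := critical_nonempty cW.
have [nW mW] := cW.
case: j j1 cW nW mW => [|[|//]] _ cW nW mW.
  case: (boolP ([set v] \proper W)) => pv.
    by case: (mW _ pv) => f [f0 _]; move: (f0 v); rewrite inE eqxx => /(_ isT).
  suff -> : W = [set v] by rewrite cards1.
  by apply/eqP; rewrite eq_sym eqEproper sub1set vW pv.
have := critical_degree cW vW; rewrite card_gt0 => /set0Pn [u].
rewrite !inE => /andP [uW evu].
have uv : v != u by apply: contraTneq evu => ->; rewrite irr_e.
have sv : [set v; u] \subset W by apply/subsetP => z; rewrite !inE => /orP [] /eqP ->.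
case: (boolP ([set v; u] \proper W)) => pv.
  case: (mW _ pv) => f [f1 fP].
  have := fP v u; rewrite !inE !eqxx orbT => /(_ isT isT evu).
  by have := f1 v; have := f1 u; rewrite !inE !eqxx orbT => /(_ isT) + /(_ isT); lia.
suff -> : W = [set v; u] by rewrite cards2 uv.
by apply/eqP; rewrite eq_sym eqEproper sv pv.
Qed.

End CriticalSets.

Section CriticalCycles.
Variables (T : finType) (e : rel T).
Hypotheses (sym_e : symmetric e) (irr_e : irreflexive e).

Definition induced (A : {set T}) : rel T := [rel x y | [&& e x y, x \in A & y \in A]].

Lemma flip_component (A : {set T}) (f : T -> nat) a :
  (forall x, x \in A -> f x < 2) ->
  (forall x y, x \in A -> y \in A -> e x y -> f x != f y) ->
  let g x := if connect (induced A) a x then 1 - f x else f x in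
  (forall x, x \in A -> g x < 2) /\
  (forall x y, x \in A -> y \in A -> e x y -> g x != g y).
Proof.
move=> f2 fP g; split=> [x /f2|x y xA yA exy]; first by rewrite /g; case: ifP; lia.
have same : connect (induced A) a x = connect (induced A) a y.
  apply/idP/idP => h; apply: connect_trans h (connect1 _).
    by rewrite /induced /= exy xA yA.
  by rewrite /induced /= sym_e exy xA yA.
have := fP _ _ xA yA exy; have := f2 _ xA; have := f2 _ yA.
by rewrite /g same; case: ifP => _; lia.
Qed.

Lemma path_parity (r : rel T) (f : T -> nat) :
  (forall a b, r a b -> [/\ f a != f b, f a < 2 & f b < 2]) ->
  forall x p, path r x p -> f (last x p) = if odd (size p) then 1 - f x else f x.
Proof.
move=> hr x p; elim: p x => [//|y q IH] x /= /andP [rxy pq].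
rewrite (IH _ pq); have [h1 h2 h3] := hr _ _ rxy.
by case: (odd (size q)) => /=; lia.
Qed.

Lemma cycle_induced (W : {set T}) (c : seq T) :
  uniq c -> 3 <= size c -> cycle e c -> {subset c <= W} ->
  (forall v, v \in W -> #|nbhd e W v| = 2) ->
  forall x y, x \in c -> y \in c -> e x y = (y == next c x) || (x == next c y).
Proof.
move=> uc sc cyc cW d2 x y xc yc.
have en z : z \in c -> e z (next c z) by move=> zc; apply: next_cycle cyc zc.
apply/idP/idP => [exy|/orP [] /eqP ->]; last 2 first.
- exact: en.
- by rewrite sym_e; apply: en.
have npx : next c x != prev c x.
  by apply: contraNneq (next_next_neq uc sc xc) => ->; rewrite next_prev.
have NE : nbhd e W x = [set next c x; prev c x].
  apply/eqP; rewrite eq_sym eqEcard cards2 npx d2 ?cW // andbT.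
  apply/subsetP => z; rewrite !inE => /orP [] /eqP ->.
    by rewrite cW ?mem_next // en.
  by rewrite cW ?mem_prev // sym_e; apply: prev_cycle cyc xc.
have : y \in nbhd e W x by rewrite !inE cW.
by rewrite NE !inE => /orP [->//|/eqP ->]; rewrite next_prev // eqxx orbT.
Qed.

Lemma path_in (r : rel T) (P : pred T) x p :
  (forall a b, r a b -> P b) -> path r x p -> {subset p <= P}.
Proof.
move=> hr; elim: p x => [//|z p IH] x /= /andP [rxz pz] y.
by rewrite inE => /orP [/eqP ->|]; [exact: hr rxz | exact: IH pz y].
Qed.

Section AtVertex.
Variables (W : {set T}) (v a b : T).
Hypotheses (cW : critical_set e 2 W) (vW : v \in W) (Nv : nbhd e W v = [set a; b]).

Lemma neighbour_off_v x : x \in [set a; b] -> x \in W :\ v.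
Proof.
rewrite -Nv !inE => /andP [xW evx]; rewrite xW andbT.
by apply: contraTneq evx => ->; rewrite irr_e.
Qed.

(* Every 2-colouring of W - v separates a and b: otherwise v could be
   coloured too. *)
Lemma critical_pair_colours (g : T -> nat) :
  (forall x, x \in W :\ v -> g x < 2) ->
  (forall x y, x \in W :\ v -> y \in W :\ v -> e x y -> g x != g y) -> g a != g b.
Proof.
move=> g2 gP; apply/negP => /eqP gab; apply: cW.1.
have ga2 : g a < 2 by apply/g2/neighbour_off_v; rewrite !inE eqxx.
apply: (colour_extend_at sym_e irr_e g2 gP (_ : 1 - g a < 2)) => [|y yW evy]; first lia.
have : y \in nbhd e W v by rewrite !inE yW evy.
by rewrite Nv !inE => /orP [] /eqP ->; rewrite -?gab; lia.
Qed.

(* Hence a and b are joined by a path avoiding v, and every such path has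
   odd length: together with v it closes an odd cycle. *)
Lemma critical_pair_connected : a != b -> connect (induced (W :\ v)) a b.
Proof.
move=> ab; have [f [f2 fP]] := cW.2 _ (properD1 vW).
apply/negPn/negP => nc; have fab := critical_pair_colours f2 fP.
have [g2 gP] := flip_component a f2 fP.
have := critical_pair_colours g2 gP; rewrite /= connect0 (negbTE nc).
have aWv : a \in W :\ v by apply: neighbour_off_v; rewrite !inE eqxx.
have bWv : b \in W :\ v by apply: neighbour_off_v; rewrite !inE eqxx orbT.
by have := f2 a aWv; have := f2 b bWv; lia.
Qed.

(* A shortest a-b path in G[W - v], closed up through v, is an odd cycle. *)
Lemma odd_cycle_through : a != b -> exists c : seq T,
  [/\ uniq c, 3 <= size c, odd (size c), cycle e c & {subset c <= W}].
Proof.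
move=> ab; have /connectP [q pq lq] := critical_pair_connected ab.
case: (shortenP pq) lq => p' pp' up' _ lp'.
have inWv y : y \in a :: p' -> y \in W :\ v.
  rewrite inE => /orP [/eqP ->|]; first by apply: neighbour_off_v; rewrite !inE eqxx.
  by apply: (path_in _ pp') => x z /and3P [].
have vp : v \notin a :: p' by apply/negP => /inWv; rewrite !inE eqxx.
have vN y : y \in [set a; b] -> e v y by rewrite -Nv !inE => /andP [].
have [f [f2 fP]] := cW.2 _ (properD1 vW).
exists (v :: a :: p'); split.
- by rewrite cons_uniq vp up'.
- by rewrite /= !ltnS lt0n size_eq0; apply: contraNneq ab => p0; rewrite lp' p0.
- have := critical_pair_colours f2 fP; rewrite lp'.
  rewrite (path_parity (r := induced (W :\ v)) (f := f)) //=.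
    by case: odd; rewrite ?eqxx.
  by move=> x y /and3P [exy xW yW]; split; [exact: fP | exact: f2 | exact: f2].
- rewrite /= vN ?inE ?eqxx //= rcons_path -lp' sym_e vN ?inE ?eqxx ?orbT // andbT.
  by apply: sub_path pp' => x y /and3P [].
- by move=> x; rewrite inE => /orP [/eqP ->//|/inWv]; rewrite inE => /andP [].
Qed.

End AtVertex.

Lemma critical_odd_cycle (W : {set T}) : critical_set e 2 W ->
  (forall v, v \in W -> #|nbhd e W v| = 2) ->
  exists c : seq T, [/\ uniq c, 3 <= size c, odd (size c),
    (forall x y, x \in c -> y \in c -> e x y = (y == next c x) || (x == next c y)) &
    [set x in c] = W].
Proof.
move=> cW d2; have /set0Pn [v vW] := critical_nonempty cW.
have /cards2P [a [b [ab Nv]]] : #|nbhd e W v| == 2 by rewrite d2.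
have [c [uc sc oc cyc sub]] := odd_cycle_through cW vW Nv ab.
exists c; split=> //; first exact: (cycle_induced uc sc cyc sub d2).
apply/eqP; rewrite eqEproper; apply/andP; split.
  by apply/subsetP => x; rewrite inE; apply: sub.
apply/negP => /cW.2; apply: odd_cycle_not_2colorable uc oc _.
by move=> x; apply: next_cycle cyc.
Qed.

End CriticalCycles.

Lemma double_half k : 2 * (k * (k - 1) %/ 2) = k * (k - 1).
Proof.
rewrite mulnC divnK // dvdn2 oddM.
by case: k => [//|k]; rewrite subSS subn0 /=; case: odd.
Qed.

Lemma sum_at_lower_bound (T : finType) (W : {set T}) (d : T -> nat) n :
  (forall v, v \in W -> n <= d v) -> \sum_(v in W) d v = n * #|W| ->
  forall v, v \in W -> d v = n.
Proof.
move=> hd hs; have : \sum_(v in W) (d v - n) = 0 by rewrite sumnB // hs sum_nat_const; lia.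
move/eqP; rewrite sum_nat_eq0 => /forallP h v vW.
by have := h v; rewrite vW /= => /eqP; have := hd v vW; lia.
Qed.

(* The counting core of the forward direction, for a critical set of
   w >= j + 2 vertices among w + c: D is its degree sum, m its number of
   inner edges, o the number of other edges, h = (j+1)j/2. *)
Lemma large_critical_arith w j m o c h D :
  2 * m = D -> w * j <= D -> 2 * h = j.+1 * j ->
  h + (w + c) - j.+1 = m + o -> c <= o -> j.+2 <= w -> 2 <= j ->
  [/\ j = 2, o = c & D = 2 * w].
Proof.
move=> hD hdeg hh heq hc hw hj.
have j2 : j = 2 by case: (leqP j 2) => hj'; [lia | exfalso; nia].
by subst j; split=> //; lia.
Qed.

Section MainTheorem.
Variables (T : finType) (e : rel T) (chi : nat).
Hypotheses (sym_e : symmetric e) (irr_e : irreflexive e).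
Hypotheses (conn : connected_graph e) (hchi : is_chromatic_number e chi).

Lemma attached_edge_count (S : {set T}) : S != set0 -> attached_trees e S ->
  #|edge_set e| = #|inner_edges e S| + (#|T| - #|S|).
Proof.
move=> nS /(attached_treesE sym_e irr_e conn nS) hout.
by rewrite (edge_split e S) hout; have := cardsC S; lia.
Qed.

Lemma attached_chromatic_le (S : {set T}) j : attached_trees e S ->
  colorable_on e S j -> 2 <= j -> chi <= j.
Proof.
move=> att cS j2; apply: chromatic_le hchi _.
by apply/colorable_onT; apply: attached_colorable sym_e irr_e att cS j2.
Qed.

(* Type A graphs satisfy the edge equation: for a clique S with |S| >= 2
   trees do not change the chromatic number |S|; a single vertex with trees
   is a tree, with chi = 1 or 2 and |V| - 1 edges. *)
Lemma typeA_edge_count : typeA e -> chi * (chi - 1) %/ 2 + #|T| - chi = #|edge_set e|.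
Proof.
move=> [S [nS Scl att]]; rewrite (attached_edge_count nS att).
have EI2 := clique_inner_edges sym_e irr_e Scl.
have S0 : 0 < #|S| by rewrite card_gt0.
have ST : #|S| <= #|T| by apply: max_card.
have chi_ge := clique_card_le Scl hchi.1.
case: (ltnP 1 #|S|) => S2.
  have chi_le := attached_chromatic_le att (colorable_on_card S irr_e) S2.
  have -> : chi = #|S| by apply/eqP; rewrite eqn_leq chi_le.
  have -> : #|inner_edges e S| = #|S| * (#|S| - 1) %/ 2 by rewrite -EI2 mulKn.
  by move: (_ %/ 2) => h; lia.
have S1 : #|S| = 1 by lia.
have chi_le : chi <= 2.
  apply: attached_chromatic_le att _ (leqnn 2).
  by apply: colorable_on_mon (colorable_on_card S irr_e); lia.
have -> : #|inner_edges e S| = 0 by move: EI2; rewrite S1; lia.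
have [->|->] : chi = 1 \/ chi = 2 by rewrite S1 in chi_ge; lia.
all: by rewrite S1; lia.
Qed.

(* Type B graphs satisfy the edge equation: chi = 3 and |E| = |V|. *)
Lemma typeB_edge_count : typeB e -> chi * (chi - 1) %/ 2 + #|T| - chi = #|edge_set e|.
Proof.
move=> [c [uc sc oc hE att]].
have nS : [set x in c] != set0.
  by move: sc; case: (c) => [//|x c'] _; apply/set0Pn; exists x; rewrite inE mem_head.
have cS : #|[set x in c]| = size c by rewrite cardsE; apply/card_uniqP.
have cT : size c <= #|T| by rewrite -cS max_card.
rewrite (attached_edge_count nS att) (cycle_inner_edges uc sc hE) cS.
have chi_le : chi <= 3.
  apply: attached_chromatic_le att (cycle_3colorable uc sc _) _ => // x y xc yc.
  by rewrite -hE.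
have chi_ge : 2 < chi.
  rewrite ltnNge; apply/negP => chi2.
  have en x : x \in c -> e x (next c x) by move=> xc; rewrite hE ?mem_next ?eqxx.
  apply: (odd_cycle_not_2colorable uc oc en).
  apply: colorable_on_sub (subsetT _) _; apply: colorable_on_mon chi2 _.
  exact/colorable_onT/hchi.1.
have -> : chi = 3 by lia.
lia.
Qed.

Section CriticalPart.
Variables (j : nat) (W : {set T}).
Hypotheses (chiE : chi = j.+1) (cW : critical_set e j W).
Hypothesis count : chi * (chi - 1) %/ 2 + #|T| - chi = #|edge_set e|.

Lemma edge_equation_at_W :
  j.+1 * j %/ 2 + (#|W| + #|~: W|) - j.+1 = #|inner_edges e W| + #|outer_edges e W|.
Proof. by rewrite cardsC -edge_split -count chiE subSS subn0. Qed.

Lemma outer_edges_W_lb : #|~: W| <= #|outer_edges e W|.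
Proof. exact: (outer_edges_lb sym_e conn (critical_nonempty cW)). Qed.

Lemma clique_case : #|W| = j.+1 -> typeA e.
Proof.
move=> hw; have Wcl := critical_clique sym_e irr_e cW hw.
exists W; split=> //; first exact: critical_nonempty cW.
apply/(attached_treesE sym_e irr_e conn (critical_nonempty cW)).
have h2 := double_half j.+1; rewrite subSS subn0 in h2.
have := clique_inner_edges sym_e irr_e Wcl; rewrite hw subSS subn0 -h2.
move=> /eqP; rewrite eqn_pmul2l // => /eqP inner.
have := edge_equation_at_W; have := outer_edges_W_lb; rewrite inner hw.
by move: (_ %/ 2) => h; lia.
Qed.

(* A larger critical set forces chi = 3 and a 2-regular W, i.e. an odd
   cycle with trees attached. *)
Lemma cycle_case : j.+1 < #|W| -> typeB e.
Proof.
move=> hw; have nW := critical_nonempty cW.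
have j2 : 2 <= j.
  case: (leqP 2 j) => // j1.
  by move: hw; rewrite (critical_small sym_e irr_e cW) ?ltnn // -ltnS.
have sumlb : #|W| * j <= \sum_(v in W) #|nbhd e W v|.
  rewrite -sum_nat_const; apply: leq_sum => v vW.
  exact: (critical_degree sym_e irr_e cW vW).
have h2 := double_half j.+1; rewrite subSS subn0 in h2.
have [j2' outer D2] := large_critical_arith (handshake sym_e irr_e W) sumlb h2
  edge_equation_at_W outer_edges_W_lb hw j2.
subst j.
have d2 : forall v, v \in W -> #|nbhd e W v| = 2.
  by apply: sum_at_lower_bound D2 => v vW; exact: (critical_degree sym_e irr_e cW vW).
have [c [uc sc oc hE cWE]] := critical_odd_cycle sym_e irr_e cW d2.
exists c; split=> //; rewrite cWE.
exact/(attached_treesE sym_e irr_e conn nW).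
Qed.

End CriticalPart.

(* Graphs satisfying the edge equation are of type A or B: take a critical
   set for chi - 1 colours inside V and compare its size with chi. *)
Lemma edge_count_types : chi * (chi - 1) %/ 2 + #|T| - chi = #|edge_set e| ->
  typeA e \/ typeB e.
Proof.
move=> count; have [j chiE] : exists j, chi = j.+1.
  by exists chi.-1; rewrite prednK // (colorable_pos conn.1 hchi.1).
have noncol : ~ colorable_on e setT j.
  by move=> /colorable_onT; apply: hchi.2; rewrite chiE.
have [W _ cW] := critical_subset_exists noncol.
case: (ltngtP #|W| j.+1) => hw.
- by move: (critical_card irr_e cW); rewrite ltnNge -ltnS hw.
- by right; apply: cycle_case chiE cW count hw.
- by left; apply: clique_case chiE cW count hw.
Qed.

End MainTheorem.

Theorem theorem1 (T : finType) (e : rel T) (chi : nat) :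
  simple_graph e -> connected_graph e -> is_chromatic_number e chi ->
  (chi * (chi - 1) %/ 2 + #|T| - chi = #|edge_set e| <-> (typeA e \/ typeB e)).
Proof.
move=> [sym_e irr_e] conn hchi; split; first exact: edge_count_types.
by case; [exact: typeA_edge_count | exact: typeB_edge_count].
Qed.
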